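(* Let $\mathbb{K}$ be a field and let $P$ be a nonempty set of primes. Let $\mathcal F=\{f_n(q)\}_{n=1}^\infty$ be a solution of $f_{mn}(q)=f_m(q)f_n(q^m)$ (for all $m,n\in\mathbb N$) in $\mathbb{K}[q]$ with $\mathrm{supp}(\mathcal F)=S(P)$. Then there exist a set $P_H\supseteq P$ of primes and a solution $\mathcal H$ of the same functional equation with $\mathrm{supp}(\mathcal H)=S(P_H)$ such that the restriction of $\mathcal H$ to $S(P)$ equals $\mathcal F$ and $\mathcal H$ is maximal.
   Context: $\mathbb N=\{1,2,3,\dots\}$. $\mathrm{supp}(\mathcal F)=\{n\in\mathbb N: f_n(q)\ne0\}$. For a set $P$ of primes, $S(P)$ is the multiplicative semigroup of positive integers generated by $P$ (including $1$). If $\mathcal G=\{g_n\}$ is a solution with $\mathrm{supp}(\mathcal G)=S(P_G)$ and $P\subseteq P_G$ is nonempty, the restriction of $\mathcal G$ to $S(P)$ is the sequence $\{f_n\}$ with $f_n=g_n$ for $n\in S(P)$ and $f_n=0$ for $n\notin S(P)$; it is again a solution. A solution $\mathcal H$ with support $S(P_H)$ is called maximal if it is not the restriction of any solution $\mathcal G$ with support $S(P_G)$, $P_G\supsetneq P_H$, to $S(P_H)$. *)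

From mathcomp Require Import all_boot all_order all_algebra.
Set Implicit Arguments. Unset Strict Implicit. Unset Printing Implicit Defensive.
Import GRing.Theory.
Local Open Scope ring_scope.

Definition prime_set (P : nat -> Prop) : Prop := forall p, P p -> prime p.

Inductive Sgen (P : nat -> Prop) : nat -> Prop :=
  | Sgen_one : Sgen P 1
  | Sgen_mul : forall p n, P p -> Sgen P n -> Sgen P (p * n)%N.

Section Defs.
Variable K : fieldType.

(* f_{mn}(q) = f_m(q) f_n(q^m) for all m, n in N = {1,2,...};
   f 0 is irrelevant (N starts at 1). *)
Definition solution (f : nat -> {poly K}) : Prop :=
  forall m n : nat, (0 < m)%N -> (0 < n)%N ->
    f (m * n)%N = f m * (f n \Po 'X^m).

Definition has_support (f : nat -> {poly K}) (P : nat -> Prop) : Prop :=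
  forall n : nat, (0 < n)%N -> (f n != 0 <-> Sgen P n).

Definition restriction_of (g : nat -> {poly K}) (P : nat -> Prop)
    (f : nat -> {poly K}) : Prop :=
  forall n : nat, (0 < n)%N ->
    (Sgen P n -> f n = g n) /\ (~ Sgen P n -> f n = 0).

Definition maximal_solution (h : nat -> {poly K}) (PH : nat -> Prop) : Prop :=
  ~ exists (PG : nat -> Prop) (g : nat -> {poly K}),
      prime_set PG /\ (forall p, PH p -> PG p) /\ (exists p, PG p /\ ~ PH p) /\
      solution g /\ has_support g PG /\ restriction_of g PH h.
End Defs.

(* Zorn's lemma.  Pairs (Q, g) of a set of primes Q and a solution g supported on S(Q) are
   preordered by extension: (Q, g) <= (Q', g') when Q is contained in Q' and g is the
   restriction of g' to S(Q).  Along a chain the supports S(Q) increase and the solutions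
   agree wherever both are nonzero, so their union is again a solution with semigroup
   support and bounds the chain.  A premaximal pair above (P, f) is the required maximal
   solution. *)
From mathcomp Require Import all_boot all_order all_algebra.
From mathcomp Require Import boolp classical_sets.
Set Implicit Arguments. Unset Strict Implicit. Unset Printing Implicit Defensive.
Import GRing.Theory.
Local Open Scope ring_scope.

Lemma Sgen_mono (Q Q' : nat -> Prop) n :
  (forall p, Q p -> Q' p) -> Sgen Q n -> Sgen Q' n.
Proof.
by move=> QQ'; elim=> [|p m Qp _ IH]; [exact: Sgen_one | exact: Sgen_mul (QQ' _ Qp) IH].
Qed.

Lemma SgenM (Q : nat -> Prop) m n : Sgen Q m -> Sgen Q n -> Sgen Q (m * n)%N.
Proof.
move=> Sm Sn; elim: Sm => [|p k Qp _ IH]; first by rewrite mul1n.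
by rewrite -mulnA; apply: Sgen_mul.
Qed.

Lemma Sgen_prime_dvd (Q : nat -> Prop) n p :
  prime_set Q -> Sgen Q n -> prime p -> (p %| n)%N -> Q p.
Proof.
move=> primeQ; elim=> [|p' m Qp' _ IH] p_pr.
  by rewrite dvdn1 => /eqP p1; rewrite p1 in p_pr.
rewrite Euclid_dvdM // => /orP[|]; last exact: IH.
by rewrite dvdn_prime2 // ?primeQ // => /eqP ->.
Qed.

Lemma Sgen_of_prime_dvd (Q : nat -> Prop) n :
  (0 < n)%N -> (forall p, prime p -> (p %| n)%N -> Q p) -> Sgen Q n.
Proof.
elim/ltn_ind: n => n IH n_gt0 dvdQ.
have [n_gt1|n_le1] := ltnP 1 n; last first.
  have -> : n = 1%N by apply/eqP; rewrite eqn_leq n_le1 n_gt0.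
  exact: Sgen_one.
have pdiv_pr := pdiv_prime n_gt1; have pdiv_dvd_n := pdiv_dvd n.
rewrite -(divnK pdiv_dvd_n) mulnC; apply: Sgen_mul; first exact: dvdQ.
apply: IH.
- by rewrite ltn_Pdiv // prime_gt1.
- by rewrite divn_gt0 ?prime_gt0 // dvdn_leq.
- by move=> q q_pr q_dvd; apply: dvdQ => //; exact: dvdn_trans q_dvd (dvdn_div pdiv_dvd_n).
Qed.

Lemma Sgen_mul_inv (Q : nat -> Prop) m n : prime_set Q -> (0 < m)%N -> (0 < n)%N ->
  Sgen Q (m * n)%N -> Sgen Q m /\ Sgen Q n.
Proof.
move=> primeQ m_gt0 n_gt0 Smn.
split; apply: Sgen_of_prime_dvd => // p p_pr p_dvd;
  apply: (Sgen_prime_dvd primeQ Smn p_pr).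
- exact: dvdn_mulr.
- exact: dvdn_mull.
Qed.

Section Extension.
Variable K : fieldType.

Definition candidate := ((nat -> Prop) * (nat -> {poly K}))%type.

Implicit Types (x y z : candidate) (g : nat -> {poly K}) (Q : nat -> Prop).

Definition admissible x := [/\ prime_set x.1, solution x.2 & has_support x.2 x.1].

Definition extends x y := (forall p, x.1 p -> y.1 p) /\ restriction_of y.2 x.1 x.2.

Lemma support_eq0 g Q n : has_support g Q -> (0 < n)%N -> ~ Sgen Q n -> g n = 0.
Proof. by move=> suppg n_gt0 nSn; apply: contra_notP nSn => /eqP /(suppg n n_gt0). Qed.

Lemma extends_refl x : has_support x.2 x.1 -> extends x x.
Proof. by move=> suppx; split=> // n n_gt0; split=> // /(support_eq0 suppx n_gt0). Qed.

Lemma extends_trans x y z : has_support x.2 x.1 -> extends x y -> extends y z -> extends x z.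
Proof.
move=> suppx [xy resxy] [yz resyz]; split=> [p /xy /yz //|n n_gt0].
split=> [Sn|]; last exact: support_eq0 suppx n_gt0.
rewrite (proj1 (resxy n n_gt0) Sn); apply: (proj1 (resyz n n_gt0)).
exact: Sgen_mono xy Sn.
Qed.

Lemma maximal_solution_of_premaximal x :
  (forall y, admissible y -> extends x y -> forall p, y.1 p -> x.1 p) ->
  maximal_solution x.2 x.1.
Proof.
move=> xmax [Q [g [primeQ [xQ [[p [Qp nxp]] [solg [suppg resg]]]]]]].
exact/nxp/(xmax (Q, g)).
Qed.

Section ChainUnion.
Variable A : set candidate.
Hypothesis A_admissible : forall x, A x -> admissible x.
Hypothesis A_chain : total_on A extends.
Hypothesis A_nonempty : exists x, A x.

Definition chain_primes p := exists x, A x /\ x.1 p.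

(* The value at n of any member whose support contains n; by [chain_solE] the choice
   does not matter. *)
Definition chain_sol n : {poly K} :=
  match pselect (exists x, A x /\ Sgen x.1 n) with
  | left e => (projT1 (cid e)).2 n
  | right _ => 0
  end.

Lemma chain_Sgen n : Sgen chain_primes n -> exists x, A x /\ Sgen x.1 n.
Proof.
elim=> [|p m [x [Ax xp]] _ [y [Ay Sym]]].
  by have [x Ax] := A_nonempty; exists x; split=> //; apply: Sgen_one.
have [[xy _]|[yx _]] := A_chain Ax Ay.
  by exists y; split=> //; apply: Sgen_mul => //; apply: xy.
by exists x; split=> //; apply: Sgen_mul => //; apply: Sgen_mono yx Sym.
Qed.

Lemma chain_solE x n : A x -> (0 < n)%N -> Sgen x.1 n -> chain_sol n = x.2 n.
Proof.
move=> Ax n_gt0 Sxn; rewrite /chain_sol; case: pselect => [e|]; last first.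
  by case; exists x.
case: (cid e) => y [Ay Syn] /=.
by have [[_ res]|[_ res]] := A_chain Ax Ay; rewrite (proj1 (res n n_gt0)).
Qed.

Lemma chain_sol_eq0 n : ~ Sgen chain_primes n -> chain_sol n = 0.
Proof.
move=> nSn; rewrite /chain_sol; case: pselect => // -[x [Ax Sxn]].
by case: nSn; apply: Sgen_mono Sxn => p xp; exists x.
Qed.

Lemma chain_union_admissible : admissible (chain_primes, chain_sol).
Proof.
split=> /=.
- by move=> p [x [Ax xp]]; have [primex _ _] := A_admissible Ax; apply: primex.
- move=> m n m_gt0 n_gt0.
  have [Smn|nSmn] := pselect (Sgen chain_primes (m * n)%N).
    have [x [Ax Sxmn]] := chain_Sgen Smn; have [primex solx _] := A_admissible Ax.
    have [Sxm Sxn] := Sgen_mul_inv primex m_gt0 n_gt0 Sxmn.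
    by rewrite !(chain_solE Ax) ?muln_gt0 ?m_gt0 //; apply: solx.
  rewrite chain_sol_eq0 //; have [Sm|nSm] := pselect (Sgen chain_primes m).
    have [Sn|nSn] := pselect (Sgen chain_primes n); first by case: nSmn; apply: SgenM.
    by rewrite (chain_sol_eq0 nSn) comp_poly0 mulr0.
  by rewrite (chain_sol_eq0 nSm) mul0r.
- move=> n n_gt0; split=> [|Sn].
    by apply: contra_neqP => nSn; apply: chain_sol_eq0.
  have [x [Ax Sxn]] := chain_Sgen Sn; have [_ _ suppx] := A_admissible Ax.
  by rewrite (chain_solE Ax n_gt0 Sxn); apply/(suppx n n_gt0).
Qed.

Lemma chain_union_ub x : A x -> extends x (chain_primes, chain_sol).
Proof.
move=> Ax; split=> [p xp|n n_gt0]; first by exists x.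
have [_ _ suppx] := A_admissible Ax.
by split=> [Sxn /=|/(support_eq0 suppx n_gt0)//]; rewrite (chain_solE Ax n_gt0 Sxn).
Qed.

End ChainUnion.

Lemma exists_premaximal_extension x0 : admissible x0 ->
  exists t, [/\ admissible t, extends x0 t &
    forall y, admissible y -> extends t y -> extends y t].
Proof.
move=> x0_adm; have [_ _ suppx0] := x0_adm.
pose T := {x | admissible x /\ extends x0 x}.
pose R : rel T := fun s t => `[< extends (proj1_sig s) (proj1_sig t) >].
have x0T : admissible x0 /\ extends x0 x0 by split=> //; apply: extends_refl.
have [t tmax] : exists t, premaximal R t.
  apply: (ZL_preorder (exist _ x0 x0T)).
  - by move=> t; have [[_ _ suppt] _] := proj2_sig t; apply/asboolP/extends_refl.
  - move=> r s t /asboolP rs /asboolP st; have [[_ _ suppr] _] := proj2_sig r.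
    exact/asboolP/(extends_trans suppr rs st).
  - move=> A chainA; have [[s As]|A0] := pselect (exists s, A s); last first.
      by exists (exist _ x0 x0T) => s As; case: A0; exists s.
    pose B x := exists2 s, A s & proj1_sig s = x.
    have B_adm x : B x -> admissible x by case=> y _ <-; have [] := proj2_sig y.
    have B_chain : total_on B extends.
      move=> _ _ [y Ay <-] [z Az <-].
      by have [/asboolP|/asboolP] := chainA y z Ay Az; [left|right].
    have B_ne : exists x, B x by exists (proj1_sig s); exists s.
    have [_ x0s] := proj2_sig s.
    have x0U : extends x0 (chain_primes B, chain_sol B).
      by apply: extends_trans suppx0 x0s (chain_union_ub B_adm B_chain _); exists s.
    exists (exist _ (chain_primes B, chain_sol B)
      (conj (chain_union_admissible B_adm B_chain B_ne) x0U)).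
    by move=> y Ay; apply/asboolP/chain_union_ub => //; exists y.
have [tadm x0t] := proj2_sig t.
exists (proj1_sig t); split=> // y yadm ty.
have yT : admissible y /\ extends x0 y by split=> //; apply: extends_trans x0t ty.
exact/asboolP/(tmax (exist _ y yT))/asboolP.
Qed.

End Extension.

Theorem mainTheorem8 (K : fieldType) (P : nat -> Prop)
  (hP : prime_set P) (hPne : exists p, P p)
  (f : nat -> {poly K}) (hf : solution f) (hsupp : has_support f P) :
  exists (PH : nat -> Prop) (h : nat -> {poly K}),
    prime_set PH /\ (forall p, P p -> PH p) /\ solution h /\
    has_support h PH /\ restriction_of h P f /\ maximal_solution h PH.
Proof.
have [[PH h] [[primeH solh supph] [PPH resh] hmax]] :=
  @exists_premaximal_extension K (P, f) (And3 hP hf hsupp).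
exists PH, h; do 5 split=> //.
apply: (@maximal_solution_of_premaximal K (PH, h)) => y yadm hy.
by have [] := hmax y yadm hy.
Qed.
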